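(* Let $r\ge 1$ and let $T=T_E=(p_1,\ldots,p_{r-1})$ be an untwisted multiplicity tree of a local Arf good semigroup $S(T)\subseteq\mathbb{N}^r$, where $E=\{M_1,\ldots,M_r\}$ is the ordered collection of multiplicity sequences along its branches. Then $$ g(S(T))=\sum_{k=1}^r g(\mathrm{AS}(M_k))+\sum_{k=1}^{r-1}p_k, $$ where $\mathrm{AS}(M_k)$ is the Arf numerical semigroup associated to $M_k$.
   Context: A multiplicity sequence is a nonincreasing sequence $(m_n)_{n\ge1}$ of positive integers, eventually equal to $1$, such that for every $n$ there is $l(n)\ge n+1$ with $m_n=\sum_{k=n+1}^{l(n)}m_k$. It is written $M=[m_1,\ldots,m_k]$ with $m_k$ its last entry different from $1$ (and $M=[1]$ for the constant sequence); $l(M)=k$ is its length and $M[i]=m_i$. Its associated Arf numerical semigroup is $\mathrm{AS}(M)=\{0,m_1,m_1+m_2,\ldots,m_1+\cdots+m_k\}\cup\{n: n\ge m_1+\cdots+m_k\}$ (and $\mathrm{AS}([1])=\mathbb{N}$). The genus of a numerical semigroup $S$ is $|\mathbb{N}\setminus S|$. A good semigroup $S\subseteq\mathbb{N}^r$ is a submonoid of $(\mathbb{N}^r,+)$ such that: (i) $\min(a,b)\in S$ (componentwise) for $a,b\in S$; (ii) if $a,b\in S$ with $a[i]=b[i]$, there is $c\in S$ with $c[i]>a[i]$, $c[j]\ge\min(a[j],b[j])$ for $j\ne i$, and $c[j]=\min(a[j],b[j])$ whenever $a[j]\ne b[j]$; (iii) there is $\delta$ with $\delta+\mathbb{N}^r\subseteq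 S$. The minimal such $\delta=(c[1],\ldots,c[r])$ is the conductor. $S$ is local if $\mathbf 0$ is the only element of $S$ with some zero coordinate, and Arf if $\{\beta\in S:\beta\ge\alpha\}-\alpha$ is a semigroup for every $\alpha\in S$ (usual partial order on $\mathbb{N}^r$). The genus of a good semigroup $S$ with conductor $\delta$ is $g(S)=\sum_{k=1}^r c[k]-d(S\setminus C)$, where $C=\delta+\mathbb{N}^r$ and $d(S\setminus C)$ is the length $n$ of a saturated chain $\mathbf 0=s_0<s_1<\cdots<s_n=\delta$ in $S$ (one that cannot be refined inside $S$). The multiplicity tree of a local Arf good semigroup $S\subseteq\mathbb{N}^r$ is a rooted tree with $r$ branches whose nodes $\mathbf n_i^j\in\mathbb{N}^r$ (node on branch $i$, level $j$; all branches share the root at level 1) satisfy $S=\{\mathbf 0\}\cup\{\sum_{\mathbf n\in T'}\mathbf n : T'$ a finite subtree rooted at the root$\}$; the $i$-th coordinates of the nodes along branch $i$ form a multiplicity sequence $M_i$, and $\mathbf n_i^j[h]=0$ iff the node is not on branch $h$. Such a tree is described by $E=\{M_1,\ldots,M_r\}$ and the numbers $p_{i,j}$ = highest level at which branches $i$ and $j$ are glued. The tree is untwisted if $p_{i,j}=\min\{p_{i,i+1},\ldots,p_{j-1,j}\}$ for all $i<j$; it is then denoted $T_E=(p_1,\ldots,p_{r-1})$ with $p_i=p_{i,i+1}$, and $S(T)$ denotes the associated semigroup. *)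

From mathcomp Require Import all_boot.
Set Implicit Arguments. Unset Strict Implicit. Unset Printing Implicit Defensive.

Definition vec (r : nat) := 'I_r -> nat.

Section Vectors.
Variable r : nat.
Implicit Types a b x d : vec r.

Definition vle a b := forall i, a i <= b i.
Definition vlt a b := vle a b /\ exists i, a i < b i.
Definition vadd a b : vec r := fun i => a i + b i.
Definition vmin a b : vec r := fun i => minn (a i) (b i).
Definition vzero : vec r := fun _ => 0.

Definition good_semigroup (S : vec r -> Prop) : Prop :=
  [/\ S vzero,
      (forall a b, S a -> S b -> S (vadd a b)),
      (forall a b, S a -> S b -> S (vmin a b)),
      (forall a b i, S a -> S b -> a i = b i ->
         exists c, [/\ S c, a i < c i &
           forall j, j != i ->
             minn (a j) (b j) <= c j /\ (a j != b j -> c j = minn (a j) (b j))])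
    & exists d, forall x, vle d x -> S x].

Definition local_sg (S : vec r -> Prop) : Prop :=
  forall a, S a -> (exists i, a i = 0) -> forall i, a i = 0.

(* Arf: {beta in S | beta >= alpha} - alpha is a semigroup for all alpha in S *)
Definition arf_sg (S : vec r -> Prop) : Prop :=
  forall al be ga, S al -> S be -> S ga -> vle al be -> vle al ga ->
    S (fun i => be i + ga i - al i).

Definition conductor_vec (S : vec r -> Prop) d := forall x, vle d x -> S x.

Definition conductor (S : vec r -> Prop) d :=
  conductor_vec S d /\ forall d', conductor_vec S d' -> vle d d'.

Definition sat_chain (S : vec r -> Prop) d (n : nat) (s : nat -> vec r) :=
  [/\ forall i, s 0 i = 0,
      forall i, s n i = d i,
      forall k, k <= n -> S (s k)
    & forall k, k < n ->
        vlt (s k) (s k.+1) /\ ~ (exists t, [/\ S t, vlt (s k) t & vlt t (s k.+1)])].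

(* g(S) = sum_k c[k] - d(S \ C) equals g *)
Definition good_genus (S : vec r -> Prop) (g : nat) : Prop :=
  (exists d n s, conductor S d /\ sat_chain S d n s) /\
  (forall d n s, conductor S d -> sat_chain S d n s -> g = \sum_(k < r) d k - n).

End Vectors.

(* multiplicity sequences, indexed from 1 (the value at 0 is irrelevant) *)
Definition is_mult_seq (m : nat -> nat) : Prop :=
  [/\ forall n, 0 < n -> 0 < m n,
      forall n, 0 < n -> m n.+1 <= m n,
      exists N, forall n, N <= n -> m n = 1
    & forall n, 0 < n -> exists l, n < l /\ m n = \sum_(n.+1 <= k < l.+1) m k].

Definition psum (m : nat -> nat) (j : nat) := \sum_(1 <= i < j.+1) m i.

Definition mlength (m : nat -> nat) (k : nat) : Prop :=
  (forall i, k < i -> m i = 1) /\ (k = 0 \/ m k <> 1).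

Definition AS (m : nat -> nat) (x : nat) : Prop :=
  exists k, mlength m k /\
    ((exists j, j <= k /\ x = psum m j) \/ psum m k <= x).

Definition ns_genus (S : nat -> Prop) (g : nat) : Prop :=
  exists s : seq nat, [/\ uniq s, forall x, x \in s <-> ~ S x & size s = g].

(* Untwisted tree T_E = (p_1,...,p_{r-1}); branches are 0-indexed, p k is the
   level at which branches k and k+1 are glued, and for i < j
   p_{i,j} = min {p_i, ..., p_{j-1}}. *)
Definition pij (p : nat -> nat) (i j : nat) : nat := \big[minn/p i]_(i <= k < j) p k.

Definition glued (p : nat -> nat) (j i h : nat) : bool :=
  (i == h) || (j <= pij p (minn i h) (maxn i h)).

(* A finite subtree rooted at the root, given by U j i = "the node at level j
   on branch i belongs to the subtree"; all levels are >= N are empty. *)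
Definition rooted_subtree (r : nat) (p : nat -> nat) (U : nat -> 'I_r -> bool) (N : nat) :=
  [/\ forall i, U 1 i,
      forall j i, 0 < j -> U j.+1 i -> U j i,
      forall j i, N <= j -> U j i = false
    & forall j (i h : 'I_r), 0 < j -> glued p j i h -> U j i = U j h].

(* S(T): the node at level j on branch i has h-coordinate M_h[j] if it lies
   on branch h, and 0 otherwise; so the h-coordinate of the sum of the nodes
   of a subtree U is the sum of M_h[j] over the levels j with U j h. *)
Definition tree_semigroup (r : nat) (M : 'I_r -> nat -> nat) (p : nat -> nat)
  (x : vec r) : Prop :=
  (forall i, x i = 0) \/
  exists U N, rooted_subtree p U N /\
    forall h, x h = \sum_(1 <= j < N) (if U j h then M h j else 0).

From mathcomp Require Import all_boot zify.
Set Implicit Arguments. Unset Strict Implicit. Unset Printing Implicit Defensive.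

(* An element of S(T) is the sum of the nodes of a finite rooted subtree, and such a subtree
   is determined by its depth D h along each branch h, the only constraint being that branches
   h and h+1 have the same depth up to their gluing level p_h.  The partial sums of a
   multiplicity sequence are strictly increasing, so comparing elements of S(T) amounts to
   comparing depth profiles, and the number of nodes of the subtree is a strictly monotone rank
   in which a covering pair always differs by exactly one node.  Hence every saturated chain
   from 0 to the conductor has as many steps as the subtree of the conductor has nodes.  That
   subtree has depth max(l(M_h), p_(h-1), p_h) on branch h, hence sum_h depth_h - sum_k p_k
   nodes, while the h-th coordinate of the conductor is g(AS(M_h)) + depth_h. *)

Lemma psum0 m : psum m 0 = 0. Proof. by rewrite /psum big_geq. Qed.

Lemma psumS m j : psum m j.+1 = psum m j + m j.+1.
Proof. by rewrite /psum big_nat_recr. Qed.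

Lemma mlength_uniq m k1 k2 : mlength m k1 -> mlength m k2 -> k1 = k2.
Proof.
move=> [one1 last1] [one2 last2]; case: (ltngtP k1 k2) => // lt.
  by case: last2 => [|[]]; [lia | apply: one1].
by case: last1 => [|[]]; [lia | apply: one2].
Qed.

Lemma mlength_exists m : (exists N, forall i, N <= i -> m i = 1) -> exists k, mlength m k.
Proof.
case=> N; elim: N => [|N IH] one; first by exists 0; split=> [i _|]; [apply: one | left].
have [mN1 | mN] := eqVneq (m N) 1; last by exists N; split=> [i /one | ]; [| right; apply/eqP].
by apply: IH => i; rewrite leq_eqVlt => /orP[/eqP <- | /one].
Qed.

Section PartialSums.
Variable m : nat -> nat.
Hypothesis m_pos : forall i, 0 < i -> 0 < m i.

Lemma leq_psum : {mono psum m : i j / i <= j}.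
Proof.
apply: leq_mono; apply: homo_ltn => [j i k | i]; first exact: ltn_trans.
by rewrite psumS -addn1 leq_add2l m_pos.
Qed.

Lemma ltn_psum : {mono psum m : i j / i < j}.
Proof. exact: leqW_mono leq_psum. Qed.

Lemma psum_inj : injective (psum m).
Proof. exact: incn_inj leq_psum. Qed.

Lemma leq_psum_id j : j <= psum m j.
Proof. by elim: j => // j IH; rewrite psumS; have := m_pos (ltn0Sn j); lia. Qed.

Lemma psum_tail l j : mlength m l -> l <= j -> psum m j = psum m l + (j - l).
Proof.
move=> [one _]; elim: j => [|j IH]; first by rewrite leqn0 => /eqP ->; rewrite psum0.
rewrite leq_eqVlt => /orP[/eqP <- | lj]; first by rewrite subnn addn0.
by rewrite psumS IH // one //; lia.
Qed.

Lemma psum_gap_last l j : mlength m l -> j < l -> (psum m j).+1 < psum m l.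
Proof.
move=> [_ last] jl; have l_pos : 0 < l by lia.
have ml : 1 < m l by case: last => [|ne]; [lia | have := m_pos l_pos; lia].
have : psum m j <= psum m l.-1 by rewrite leq_psum; lia.
by rewrite -{2}(prednK l_pos) psumS prednK //; lia.
Qed.

Lemma AS_psum l x : mlength m l ->
  AS m x <-> (exists j, j <= l /\ x = psum m j) \/ psum m l <= x.
Proof. by move=> ml; split=> [[k [/mlength_uniq/(_ ml) <-]] | AS_x] //; exists l.
Qed.

Lemma genus_AS l g : mlength m l -> ns_genus (AS m) g -> g = psum m l - l.
Proof.
move=> ml [s [s_uniq s_gaps <-]].
pose E := [seq psum m j | j <- iota 0 l].
have E_AS x : x \in E -> AS m x.
  case/mapP => j; rewrite mem_iota => /andP[_ jl] ->.
  by apply/(AS_psum _ ml); left; exists j; split; lia.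
have gaps_E : perm_eq (s ++ E) (iota 0 (psum m l)).
  apply: uniq_perm; rewrite ?iota_uniq //.
    rewrite cat_uniq s_uniq (map_inj_uniq psum_inj) iota_uniq andbT /=.
    by apply/hasPn => x /E_AS xAS; apply/negP => /s_gaps.
  move=> x; rewrite mem_cat mem_iota /=; apply/orP/idP => [[/s_gaps gap | ]|x_lt].
  - by rewrite ltnNge; apply/negP => le; apply: gap; apply/(AS_psum _ ml); right.
  - by case/mapP => j; rewrite mem_iota => /andP[_ jl] ->; rewrite ltn_psum.
  have [xE | xE] := boolP (x \in E); [by right | left; apply/s_gaps].
  move/(AS_psum _ ml) => [[j [jl xj]] | le]; last by lia.
  move: jl xE; rewrite leq_eqVlt => /orP[/eqP jl | jl]; first by move: x_lt; rewrite xj jl ltnn.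
  by apply/negP; apply/negPn/mapP; exists j; rewrite ?mem_iota.
by move: (perm_size gaps_E); rewrite size_cat /E size_map !size_iota => <-; rewrite addnK.
Qed.

End PartialSums.

Lemma sum_levels (f : nat -> nat) c N :
  \sum_(1 <= j < N) (if j <= c then f j else 0) = psum f (minn c N.-1).
Proof.
elim: N => [|[|N] IH]; try by rewrite big_geq // minn0 psum0.
rewrite big_nat_recr //= IH /=; case: (leqP N.+1 c) => cN.
  by rewrite (minn_idPr (ltnW cN)) psumS.
by rewrite ltnS in cN; rewrite addn0 (minn_idPl cN).
Qed.

Lemma down_closed_levels (f : nat -> bool) N :
  (forall j, 0 < j -> f j.+1 -> f j) -> (forall j, N <= j -> f j = false) ->
  forall j, 0 < j -> f j = (j <= \sum_(1 <= i < N) f i).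
Proof.
move=> f_down; elim: N => [|N IH] f_high j j_pos.
  by rewrite big_geq // f_high // leqNgt j_pos.
have f_below i k : 0 < k -> f (k + i) -> f k.
  move=> k_pos; elim: i => [|i IHi]; rewrite ?addn0 // addnS => fS.
  by apply/IHi/(f_down _ _ fS); lia.
have [/andP[_ fN] | fN] := boolP ((0 < N) && f N).
  have -> : \sum_(1 <= i < N.+1) f i = N.
    rewrite (eq_big_nat _ _ (F2 := fun=> 1)) ?sum_nat_const_nat ?muln1 ?subn1 //.
    move=> i /andP[i_pos iN]; suff -> : f i by [].
    by apply: (f_below (N - i)); rewrite // subnKC.
  case: (leqP j N) => jN; last by rewrite f_high.
  by apply: (f_below (N - j)); rewrite // subnKC.
case: N IH fN f_high => [_ _ f_high | N IH fN f_high].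
  by rewrite big_geq // f_high // leqNgt j_pos.
rewrite /= in fN; rewrite big_nat_recr //= (negbTE fN) addn0; apply: IH => // i.
by rewrite leq_eqVlt => /orP[/eqP <- | /f_high]; [exact: negbTE fN |].
Qed.

Lemma minn_cut a b c :
  (forall j, 0 < j <= c -> (j <= a) = (j <= b)) -> minn a c = minn b c.
Proof.
wlog ab : a b / a < b => [wlog_ab cut | cut].
  case: (ltngtP a b) => [ab | ba | -> //]; first exact: wlog_ab.
  by symmetry; apply: wlog_ab => // j /cut ->.
case: (leqP c a) => ca; first by rewrite !(minn_idPr _) // (leq_trans ca (ltnW ab)).
by have := cut a.+1 ca; rewrite ltnn ab.
Qed.

Lemma pij_le p a b t : a <= t < b -> pij p a b <= p t.
Proof.
rewrite /pij -mem_index_iota; elim: (index_iota a b) => //= x s IH.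
rewrite inE big_cons => /orP[/eqP-> | /IH le]; first exact: geq_minl.
exact: leq_trans (geq_minr _ _) le.
Qed.

Lemma pij_adj p k : pij p k k.+1 = p k.
Proof. by rewrite /pij big_ltn // big_geq // minnn. Qed.

Definition covers r (S : vec r -> Prop) (x y : vec r) :=
  vlt x y /\ ~ (exists t, [/\ S t, vlt x t & vlt t y]).

Lemma conductor_unique r (S : vec r -> Prop) d d' :
  conductor S d -> conductor S d' -> d =1 d'.
Proof. by move=> [cd min_d] [cd' min_d'] h; apply/eqP; rewrite eqn_leq min_d // min_d'. Qed.

Section Tree.
Variables (n : nat) (p : nat -> nat) (M : 'I_n.+1 -> nat -> nat).
Hypothesis M_pos : forall h i, 0 < i -> 0 < M h i.
Hypothesis p_pos : forall k, k < n -> 0 < p k.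

Local Notation S := (tree_semigroup M p).
Implicit Types D E : nat -> nat.

(* [D h] is the depth along branch [h] of a rooted subtree, whose nodes on branch [h] are
   then the levels [1 .. D h]; branches [k] and [k.+1] share their nodes up to level [p k]. *)
Definition depth_profile (D : nat -> nat) :=
  forall k, k < n -> minn (D k) (p k) = minn (D k.+1) (p k).

Definition profile_sum (D : nat -> nat) : vec n.+1 := fun h => psum (M h) (D h).

Lemma profile_range D a b c : depth_profile D -> a <= n -> b <= n ->
  (forall t, minn a b <= t < maxn a b -> c <= p t) -> minn (D a) c = minn (D b) c.
Proof.
move=> HD; wlog ab : a b / a <= b => [wlog_ab an bn range | ].
  have [ab | ba] := boolP (a <= b); first exact: wlog_ab.
  by symmetry; apply: wlog_ab; rewrite 1?minnC 1?maxnC //; lia.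
rewrite (minn_idPl ab) (maxn_idPr ab); elim: b ab => [|b IH]; first by rewrite leqn0 => /eqP->.
rewrite leq_eqVlt => /orP[/eqP-> // | ab] an bn range.
have cb : c <= p b by apply: range; lia.
rewrite (IH ab an (ltnW bn)) => [|t tb]; last by apply: range; lia.
by have := HD b bn; lia.
Qed.

Lemma tree_semigroup_profile x :
  S x -> exists2 D, depth_profile D & x =1 profile_sum D.
Proof.
case=> [x0 | [U [N [[_ U_down U_high U_glued] xU]]]].
  by exists (fun=> 0) => [k _ | h]; rewrite /profile_sum ?psum0 ?x0.
pose D k := \sum_(1 <= j < N) U j (inord k).
have depthD k j : 0 < j -> U j (inord k) = (j <= D k).
  exact: (down_closed_levels (fun j => U_down j _) (fun j => U_high j _)).
have DN k : D k <= N.-1.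
  rewrite -subn1 -[N - 1]muln1 -sum_nat_const_nat; apply: leq_sum => j _; exact: leq_b1.
exists D => [k kn | h].
  apply: minn_cut => j /andP[j_pos jp]; rewrite -!depthD //; apply: U_glued => //.
  have [k_lt k1_lt] : k < n.+1 /\ k.+1 < n.+1 by lia.
  by rewrite /glued !inordK // (minn_idPl (leqnSn k)) (maxn_idPr (leqnSn k)) pij_adj jp orbT.
rewrite xU /profile_sum -(minn_idPl (DN h)) -sum_levels.
by apply: eq_big_nat => j /andP[j_pos _]; rewrite -depthD // inord_val.
Qed.

Lemma profile_tree_semigroup D x :
  depth_profile D -> x =1 profile_sum D -> S x.
Proof.
move=> HD xD.
have [/existsP[h0 /eqP Dh0] | /existsPn D_pos] := boolP [exists h : 'I_n.+1, D h == 0].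
  left=> h; rewrite xD /profile_sum.
  suff -> : D h = 0 by rewrite psum0.
  have glued1 t : minn h h0 <= t < maxn h h0 -> 1 <= p t.
    by move=> tr; apply: p_pos; have := ltn_ord h; have := ltn_ord h0; lia.
  by have := profile_range HD (ltn_ord h) (ltn_ord h0) glued1; rewrite Dh0; lia.
right; exists (fun j (h : 'I_n.+1) => j <= D h), (\sum_(h < n.+1) D h).+1.
have D_sum (h : 'I_n.+1) : D h <= \sum_(i < n.+1) D i by rewrite (bigD1 h) //= leq_addr.
split; last by move=> h; rewrite xD sum_levels /= (minn_idPl (D_sum h)).
split=> [i | j i _ /ltnW // | j i | j i h _ /orP[/eqP-> // | jp]].
- by rewrite lt0n D_pos.
- by move=> lt; apply/negbTE; rewrite -ltnNge (leq_ltn_trans (D_sum i)).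
- have glued t : minn i h <= t < maxn i h -> j <= p t by move/(pij_le p)/(leq_trans jp).
  have := profile_range HD (ltn_ord i) (ltn_ord h) glued.
  by move=> eq_min; apply/idP/idP => ?; lia.
Qed.

Lemma profile_sum_tree_semigroup D : depth_profile D -> S (profile_sum D).
Proof. by move=> HD; apply: profile_tree_semigroup HD _. Qed.

Definition dle (D D' : nat -> nat) := forall h : 'I_n.+1, D h <= D' h.

Lemma vle_profile D D' x y : x =1 profile_sum D -> y =1 profile_sum D' ->
  vle x y <-> dle D D'.
Proof.
by move=> xD yD; split=> le h; move: (le h); rewrite xD yD /profile_sum (leq_psum (M_pos h)).
Qed.

Lemma vlt_profile D D' x y : x =1 profile_sum D -> y =1 profile_sum D' ->
  vlt x y <-> dle D D' /\ exists h : 'I_n.+1, D h < D' h.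
Proof.
move=> xD yD; rewrite /vlt; split=> -[le [h lt]]; split; try exact/(vle_profile xD yD).
  by exists h; move: lt; rewrite xD yD /profile_sum (ltn_psum (M_pos h)).
by exists h; rewrite xD yD /profile_sum (ltn_psum (M_pos h)).
Qed.

Definition glue_left h := if h is h'.+1 then p h' else 0.

(* Every node is counted on the leftmost branch through it: on branch [h], the levels above
   [glue_left h]. *)
Definition nodes (D : nat -> nat) := \sum_(h < n.+1) (D h - glue_left h).

Lemma eq_nodes D D' : (forall h : 'I_n.+1, D h = D' h) -> nodes D = nodes D'.
Proof. by move=> eqD; apply: eq_bigr => h _; rewrite eqD. Qed.

(* An increase of depth at [k] that is hidden by the gluing with branch [k - 1] is an
   increase of depth on branch [k - 1]. *)
Lemma profile_increase_left D D' k : depth_profile D -> depth_profile D' -> dle D D' ->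
  k <= n -> D k < D' k -> exists h : 'I_n.+1, D h - glue_left h < D' h - glue_left h.
Proof.
move=> HD HD' le; elim: k => [_ lt | k IH kn lt]; first by exists ord0; rewrite /= !subn0.
have [pk | Dk] := ltnP (p k) (D' k.+1).
  by exists (Ordinal (kn : k.+1 < n.+1)) => /=; lia.
by apply: IH; [exact: ltnW | have := HD k kn; have := HD' k kn; lia].
Qed.

Lemma ltn_nodes D D' : depth_profile D -> depth_profile D' -> dle D D' ->
  (exists k : 'I_n.+1, D k < D' k) -> nodes D < nodes D'.
Proof.
move=> HD HD' le [k lt].
have [h lt_h] := profile_increase_left HD HD' le (ltn_ord k) lt.
rewrite /nodes (bigD1 h) //= [X in _ < X](bigD1 h) //= -addSn leq_add //.
by apply: leq_sum => i _; apply: leq_sub2r.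
Qed.

(* [grow D k0] adds to the subtree of [D] the node at level [(D k0).+1] of branch [k0]; this
   node lies on the branches [h] in [reach]. *)
Section Step.
Variables (D : nat -> nat) (k0 : 'I_n.+1).
Hypothesis HD : depth_profile D.

Definition reach h :=
  (h <= n) && all (fun t => (D k0).+1 <= p t) (index_iota (minn h k0) (maxn h k0)).

Lemma reachP h : reflect
  (h <= n /\ forall t, minn h k0 <= t < maxn h k0 -> (D k0).+1 <= p t) (reach h).
Proof.
apply: (iffP andP) => -[hn range]; split=> //.
  by move=> t tr; apply: (allP range); rewrite mem_index_iota.
by apply/allP => t; rewrite mem_index_iota; apply: range.
Qed.

Lemma reach_k0 : reach k0.
Proof. by apply/reachP; split=> [|t]; [rewrite -ltnS | rewrite minnn maxnn; lia]. Qed.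

Lemma reach_minn E h : depth_profile E -> reach h ->
  minn (E h) (D k0).+1 = minn (E k0) (D k0).+1.
Proof. by move=> HE /reachP[hn range]; apply: (profile_range HE hn (ltn_ord k0) range). Qed.

Lemma reachS k : k < n -> (D k0).+1 <= p k -> reach k = reach k.+1.
Proof.
move=> kn jp; apply/reachP/reachP => -[_ range]; split=> [|t tr]; try lia.
  by case: (t =P k) => [-> // | tk]; apply: range; lia.
by case: (t =P k) => [-> // | tk]; apply: range; lia.
Qed.

Lemma reach_leftmost_uniq a h : reach a -> reach h -> glue_left h <= D k0 -> a <= h -> a = h.
Proof.
case: h => [|h] reach_a reach_h gl; first by rewrite leqn0 => /eqP.
rewrite leq_eqVlt => /orP[/eqP // | ah]; exfalso.
case/reachP: reach_a => _ range_a; case/reachP: reach_h => _ range_h.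
have : (D k0).+1 <= p h by case: (leqP h.+1 k0) => hk; [apply: range_a | apply: range_h]; lia.
by rewrite ltnNge gl.
Qed.

Lemma sum_reach_leftmost : \sum_(h < n.+1) (reach h && (glue_left h <= D k0)) = 1.
Proof.
case: (ex_minnP (ex_intro reach _ reach_k0)) => a reach_a a_min.
have gl_a : glue_left a <= D k0.
  case: a reach_a a_min => //= a reach_a a_min; rewrite leqNgt; apply/negP => jp.
  have an : a < n by case/reachP: reach_a.
  by have := a_min a; rewrite (reachS an jp) => /(_ reach_a); rewrite ltnn.
have an : a < n.+1 by case/reachP: reach_a.
apply/eqP/sum_nat_eq1; exists (Ordinal an); split=> // [|h ha].
  by rewrite -[Ordinal an : nat]/a reach_a gl_a.
case: andP => // -[reach_h gl]; exfalso; move/eqP: ha; apply; apply: val_inj => /=.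
by apply/esym/reach_leftmost_uniq => //; apply: a_min.
Qed.

Definition grow h := if reach h then (D k0).+1 else D h.

Lemma reach_depth h : reach h -> D h = D k0.
Proof. by move/(reach_minn HD); lia. Qed.

Lemma grow_profile : depth_profile grow.
Proof.
move=> k kn; have [jp | pj] := leqP (D k0).+1 (p k).
  by rewrite /grow -(reachS kn jp); case: ifP => // _; apply: HD.
have low h : minn (grow h) (p k) = minn (D h) (p k).
  by rewrite /grow; case: ifP => // /reach_depth ->; lia.
by rewrite !low HD.
Qed.

Lemma grow_ge : dle D grow.
Proof. by move=> h; rewrite /grow; case: ifP => // /reach_depth ->. Qed.

Lemma grow_le D' : depth_profile D' -> dle D D' -> D k0 < D' k0 -> dle grow D'.
Proof. by move=> HD' le lt h; rewrite /grow; case: ifP => // /(reach_minn HD'); lia. Qed.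

Lemma grow_k0 : D k0 < grow k0.
Proof. by rewrite /grow reach_k0. Qed.

Lemma nodes_grow : nodes grow = (nodes D).+1.
Proof.
rewrite /nodes -[RHS]addn1 -[X in _ + X]sum_reach_leftmost -big_split /=.
apply: eq_bigr => h _.
rewrite /grow; case: ifP => [/reach_depth -> | _] /=; last by rewrite addn0.
by case: leqP => /=; lia.
Qed.

End Step.

Lemma nodes_step D D' (k : 'I_n.+1) :
  depth_profile D -> depth_profile D' -> dle D D' -> D k < D' k ->
  exists D'', [/\ depth_profile D'', dle D D'', dle D'' D', D k < D'' k
                & nodes D'' = (nodes D).+1].
Proof.
move=> HD HD' le lt; exists (grow D k); split; first exact: grow_profile.
- exact: grow_ge.
- exact: grow_le.
- exact: grow_k0.
- exact: nodes_grow.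
Qed.

Lemma covers_profile D D' x y : depth_profile D -> depth_profile D' ->
  x =1 profile_sum D -> y =1 profile_sum D' ->
  covers S x y <-> dle D D' /\ nodes D' = (nodes D).+1.
Proof.
move=> HD HD' xD yD; split=> [[/(vlt_profile xD yD)[le [k lt]] no_between] | [le nodesS]].
  split=> //; have [D'' [HD'' le1 le2 lt'' <-]] := nodes_step HD HD' le lt.
  have [/forallP eqD | /forallPn[h neq]] := boolP [forall h : 'I_n.+1, D'' h == D' h].
    by apply: eq_nodes => h; rewrite (eqP (eqD h)).
  case: no_between; exists (profile_sum D''); split; first exact: profile_sum_tree_semigroup.
    by apply/(vlt_profile xD (frefl _)); split=> //; exists k.
  by apply/(vlt_profile (frefl _) yD); split=> //; exists h; have := le2 h; lia.
have [k lt] : exists k : 'I_n.+1, D k < D' k.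
  have [/existsP // | /existsPn eqD] := boolP [exists k : 'I_n.+1, D k < D' k].
  have : nodes D' = nodes D by apply: eq_nodes => h; have := le h; have := eqD h; lia.
  by rewrite nodesS => /esym/n_Sn.
split=> [|[t [St xt ty]]]; first by apply/(vlt_profile xD yD); split=> //; exists k.
have [T HT tT] := tree_semigroup_profile St.
have [xt_le xt_lt] := (vlt_profile xD tT).1 xt.
have [ty_le ty_lt] := (vlt_profile tT yD).1 ty.
by have := ltn_nodes HD HT xt_le xt_lt; have := ltn_nodes HT HD' ty_le ty_lt; lia.
Qed.

Lemma sat_chain_nodes d m s : sat_chain S d m s ->
  forall k, k <= m -> exists D, [/\ depth_profile D, s k =1 profile_sum D & nodes D = k].
Proof.
move=> [s0 _ Ss cov]; elim=> [_ | k IH km].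
  exists (fun=> 0); split=> // [h |]; first by rewrite s0 /profile_sum psum0.
  by apply: big1 => h _; rewrite sub0n.
have [D [HD sD nD]] := IH (ltnW km).
have [D' HD' sD'] := tree_semigroup_profile (Ss _ km).
exists D'; split=> //; rewrite -nD.
by have [_ ->] := (covers_profile HD HD' sD sD').1 (cov k km).
Qed.

Lemma sat_chain_length E d m s : d =1 profile_sum E -> sat_chain S d m s -> m = nodes E.
Proof.
move=> dE chain; have [D [HD sD <-]] := sat_chain_nodes chain (leqnn m).
apply: eq_nodes => h; apply: (psum_inj (M_pos h)).
by have [_ sm _ _] := chain; rewrite -[LHS]/(profile_sum D h) -sD sm dE.
Qed.

Lemma exists_sat_chain E : depth_profile E -> exists m s, sat_chain S (profile_sum E) m s.
Proof.
move=> HE.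
suff chain_from N D : nodes E - nodes D = N -> depth_profile D -> dle D E ->
    exists m s, [/\ s 0 =1 profile_sum D, s m =1 profile_sum E,
      forall k, k <= m -> S (s k) & forall k, k < m -> covers S (s k) (s k.+1)].
  have [m [s [s0 sm Ss cov]]] :=
    chain_from _ (fun=> 0) erefl (fun _ _ => erefl) (fun h => leq0n _).
  by exists m, s; split=> // h; rewrite s0 /profile_sum psum0.
elim: N D => [|N IH] D nodesE HD le.
all: have [/forallP eqD | /forallPn[k neq]] := boolP [forall h : 'I_n.+1, D h == E h].
1,3: exists 0, (fun=> profile_sum D); split=> // [h | k _].
1,3: by rewrite /profile_sum (eqP (eqD h)).
1,2: exact: profile_sum_tree_semigroup.
all: have lt : D k < E k by have := le k; lia.
  by have := ltn_nodes HD HE le (ex_intro _ k lt); lia.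
have [D'' [HD'' le1 le2 _ nodesS]] := nodes_step HD HE le lt.
have [|m [s [s0 sm Ss cov]]] := IH D'' _ HD'' le2; first by lia.
exists m.+1, (fun i => if i is i'.+1 then s i' else profile_sum D); split=> //.
  by case=> [_ | i /Ss]; first exact: profile_sum_tree_semigroup.
case=> [_ | i /cov //]; apply/(covers_profile HD HD'' (frefl _) s0); split=> //.
Qed.

Section Conductor.
Variable l : nat -> nat.
Hypothesis l_len : forall h : 'I_n.+1, mlength (M h) (l h).

Definition glue_right k := if k < n then p k else 0.

(* Beyond [l k] every multiplicity on branch [k] is 1, and beyond both gluing levels branch
   [k] grows independently of its neighbours. *)
Definition conductor_depth k := maxn (l k) (maxn (glue_left k) (glue_right k)).

Lemma profile_above_conductor_depth D :
  (forall k, conductor_depth k <= D k) -> depth_profile D.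
Proof.
move=> ge k kn; have := ge k; have := ge k.+1.
by rewrite /conductor_depth /glue_right /= kn; lia.
Qed.

Lemma conductor_depth_profile : depth_profile conductor_depth.
Proof. exact: profile_above_conductor_depth. Qed.

Lemma psum_conductor_depth (h : 'I_n.+1) t :
  psum (M h) (conductor_depth h + t) = psum (M h) (conductor_depth h) + t.
Proof.
have l_le : l h <= conductor_depth h by apply: leq_maxl.
rewrite (psum_tail (l_len h) (leq_trans l_le (leq_addr t _))) (psum_tail (l_len h) l_le).
by rewrite -addnA -addnBAC.
Qed.

Lemma conductor_vec_conductor_depth : conductor_vec S (profile_sum conductor_depth).
Proof.
move=> x ge.
pose D k := conductor_depth k + (x (inord k) - profile_sum conductor_depth (inord k)).
apply: (@profile_tree_semigroup D).
  by apply: profile_above_conductor_depth => k; apply: leq_addr.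
move=> h; rewrite /profile_sum /D inord_val psum_conductor_depth subnKC //; exact: ge.
Qed.

Lemma depth_ge_glue D (h : 'I_n.+1) : depth_profile D ->
  (forall i : 'I_n.+1, i != h -> conductor_depth i <= D i) ->
  maxn (glue_left h) (glue_right h) <= D h.
Proof.
move=> HD ge; have hn : h <= n by rewrite -ltnS.
have ge_nat i : i <= n -> i != h -> conductor_depth i <= D i.
  by move=> i_n ih; rewrite -[i](@inordK n) //; apply: ge; rewrite -val_eqE /= inordK.
rewrite geq_max; apply/andP; split.
  case: (nat_of_ord h) hn ge_nat => //= k kn ge_nat.
  have := HD k kn; have := ge_nat k (ltnW kn) (negbT (ltn_eqF (ltnSn k))).
  by rewrite /conductor_depth /glue_right kn; lia.
rewrite /glue_right; case: ifP => // hn'.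
have := HD h hn'; have := ge_nat h.+1 hn' (negbT (gtn_eqF (ltnSn h))).
by rewrite /conductor_depth /glue_left; lia.
Qed.

Lemma conductor_depth_gap D (h : 'I_n.+1) : depth_profile D ->
  (forall i : 'I_n.+1, i != h -> conductor_depth i <= D i) -> D h < conductor_depth h ->
  (psum (M h) (D h)).+1 < psum (M h) (conductor_depth h).
Proof.
move=> HD ge lt; have glue := depth_ge_glue HD ge.
have Dl : D h < l h by move: lt; rewrite /conductor_depth; lia.
apply: leq_trans (psum_gap_last (M_pos h) (l_len h) Dl) _.
by rewrite (leq_psum (M_pos h)) leq_maxl.
Qed.

(* The vector [x] lies above [d], but no depth profile can realise its [h]-coordinate. *)
Lemma conductor_depth_minimal d : conductor_vec S d -> vle (profile_sum conductor_depth) d.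
Proof.
move=> cond h; rewrite leqNgt; apply/negP => lt.
pose x : vec n.+1 := fun i => if i == h then (profile_sum conductor_depth h).-1
                              else maxn (d i) (profile_sum conductor_depth i).
have [D HD xD] : exists2 D, depth_profile D & x =1 profile_sum D.
  apply/tree_semigroup_profile/cond => i; rewrite /x.
  by case: eqP => [-> | _]; [lia | exact: leq_maxl].
have xh : profile_sum D h = (profile_sum conductor_depth h).-1 by rewrite -xD /x eqxx.
have Dh : D h < conductor_depth h.
  by rewrite -(ltn_psum (M_pos h)); move: xh lt; rewrite /profile_sum; lia.
have ge (i : 'I_n.+1) : i != h -> conductor_depth i <= D i.
  move=> ih; have := xD i; rewrite /x (negbTE ih) -(leq_psum (M_pos i)) => e.
  exact: leq_trans (leq_maxr (d i) _) (eq_leq e).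
by have := conductor_depth_gap HD ge Dh; move: xh lt; rewrite /profile_sum; lia.
Qed.

Lemma conductor_conductor_depth : conductor S (profile_sum conductor_depth).
Proof. by split; [exact: conductor_vec_conductor_depth | exact: conductor_depth_minimal]. Qed.

Lemma nodes_conductor_depth :
  nodes conductor_depth + \sum_(k < n) p k = \sum_(h < n.+1) conductor_depth h.
Proof.
have -> : \sum_(k < n) p k = \sum_(h < n.+1) glue_left h by rewrite big_ord_recl.
rewrite -big_split; apply: eq_bigr => h _ /=; rewrite subnK //.
by rewrite /conductor_depth !leq_max leqnn !orbT.
Qed.

Theorem tree_semigroup_genus :
  good_genus S (\sum_(h < n.+1) (psum (M h) (l h) - l h) + \sum_(k < n) p k).
Proof.
split.
  have [m [s chain]] := exists_sat_chain conductor_depth_profile.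
  by exists (profile_sum conductor_depth), m, s; split=> //; exact: conductor_conductor_depth.
move=> d m s d_cond chain.
have d_eq := conductor_unique d_cond conductor_conductor_depth.
rewrite (sat_chain_length d_eq chain) (eq_bigr _ (fun h _ => d_eq h)).
have -> : \sum_(h < n.+1) profile_sum conductor_depth h =
    \sum_(h < n.+1) (psum (M h) (l h) - l h) + \sum_(h < n.+1) conductor_depth h.
  rewrite -big_split; apply: eq_bigr => h _ /=.
  have l_le : l h <= conductor_depth h := leq_maxl _ _.
  have := leq_psum_id (M_pos h) (l h).
  by rewrite /profile_sum (psum_tail (l_len h) l_le); lia.
by rewrite -nodes_conductor_depth; lia.
Qed.

End Conductor.

End Tree.

Theorem mainTheorem1 (r : nat) (hr : 1 <= r)
  (M : 'I_r -> nat -> nat) (p : nat -> nat) (g : 'I_r -> nat) :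
  (forall i, is_mult_seq (M i)) ->
  (forall k, k < r.-1 -> 1 <= p k) ->
  good_semigroup (tree_semigroup M p) ->
  local_sg (tree_semigroup M p) ->
  arf_sg (tree_semigroup M p) ->
  (forall k, ns_genus (AS (M k)) (g k)) ->
  good_genus (tree_semigroup M p) (\sum_(k < r) g k + \sum_(k < r.-1) p k).
Proof.
case: r hr M g => [//|n] _ M g M_mult p_pos _ _ _ g_AS.
have M_pos h : forall i, 0 < i -> 0 < M h i by case: (M_mult h).
have len_ex h : exists k, mlength (M h) k.
  by case: (M_mult h) => _ _ ev _; exact: mlength_exists.
have [l' l'_len] := fin_all_exists len_ex.
pose l k := l' (inord k).
have l_len (h : 'I_n.+1) : mlength (M h) (l h) by rewrite /l inord_val.
rewrite (eq_bigr _ (fun h _ => genus_AS (M_pos h) (l_len h) (g_AS h))).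
exact: tree_semigroup_genus.
Qed.
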